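(* Let $k\ge1$ be an integer, $a\in\mathbb{R}$ with $0<|a|<1$, $\sigma>0$, and let $\{\alpha_n\}$ be a sequence of real numbers with $|\alpha_n|\le\sigma$ for all $n$. If $$\sigma<\frac{1-|a|}{1-|a|^k},$$ then every real solution of $$x_{n+1}=ax_n+\alpha_n\tanh\big(x_n-a^kx_{n-k}\big),\quad n\ge0,$$ converges to $0$.
   Context: Solutions are generated by iteration from arbitrary real initial values $x_0,x_{-1},\dots,x_{-k}$. *)

From Stdlib Require Import Reals.

(* Write D m := y (m+1) - a y m for the defect of the solution with respect to
   the linear recurrence y (m+1) = a y m.  The proof has three independent parts.
   - Since |tanh u| <= |u| and y (p+k) - a^k y p is a geometric combination of
     the k defects D p, ..., D (p+k-1), the defect satisfies the k-step
     contraction  |D (p+k)| <= c * max_{j<k} |D (p+j)|  with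
     c = sigma (1 - |a|^k) / (1 - |a|), and the hypothesis on sigma is exactly
     c < 1 ([tanh_feedback_contraction], [contraction_factor_bounds]).
   - A k-step contraction with factor c < 1 forces |D n| <= B c^(n/k), hence
     D n -> 0 ([k_step_geometric_bound], [k_step_contraction_cv]).
   - A linear recurrence with |a| < 1 driven by a vanishing perturbation D
     converges to 0 ([perturbed_linear_cv]). *)

From Stdlib Require Import Reals Lra Lia.
Open Scope R_scope.

(* |tanh u| <= |u|: the function u cosh u - sinh u vanishes at 0 and has
   derivative u sinh u >= 0, so sinh u lies between 0 and u cosh u. *)

Lemma cosh_pos (u : R) : 0 < cosh u.
Proof.
  unfold cosh. pose proof (exp_pos u). pose proof (exp_pos (- u)). lra.
Qed.

Lemma derivable_pt_lim_sinh_defect (x : R) :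
  derivable_pt_lim (fun u => u * cosh u - sinh u) x (x * sinh x).
Proof.
  replace (x * sinh x) with ((1 * cosh x + x * sinh x) - cosh x) by ring.
  apply (derivable_pt_lim_minus (fun u => u * cosh u) sinh).
  - apply (derivable_pt_lim_mult id cosh).
    + apply derivable_pt_lim_id.
    + apply derivable_pt_lim_cosh.
  - apply derivable_pt_lim_sinh.
Qed.

Lemma sinh_defect_increasing : increasing (fun u => u * cosh u - sinh u).
Proof.
  assert (pr : derivable (fun u => u * cosh u - sinh u)).
  { intro x. exists (x * sinh x). apply derivable_pt_lim_sinh_defect. }
  apply (nonneg_derivative_1 _ pr). intro x.
  rewrite (derive_pt_eq_0 _ x (x * sinh x)) by apply derivable_pt_lim_sinh_defect.
  destruct (Rtotal_order x 0) as [Hneg | [Hzero | Hpos]].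
  - assert (sinh x < sinh 0) by (apply sinh_lt; lra). rewrite sinh_0 in *. nra.
  - subst. lra.
  - assert (sinh 0 < sinh x) by (apply sinh_lt; lra). rewrite sinh_0 in *. nra.
Qed.

Lemma Rabs_sinh_le (u : R) : Rabs (sinh u) <= Rabs u * cosh u.
Proof.
  pose proof (sinh_defect_increasing 0 u) as Hup.
  pose proof (sinh_defect_increasing u 0) as Hdown.
  cbv beta in Hup, Hdown. rewrite sinh_0, cosh_0 in Hup, Hdown.
  destruct (Rle_dec 0 u) as [Hu | Hu].
  - assert (0 <= sinh u).
    { destruct (Req_dec u 0) as [-> | Hne]; [rewrite sinh_0; lra |].
      rewrite <- sinh_0. left. apply sinh_lt. lra. }
    rewrite !Rabs_right by lra. specialize (Hup Hu). lra.
  - assert (sinh u < 0) by (rewrite <- sinh_0; apply sinh_lt; lra).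
    rewrite !Rabs_left by lra. specialize (Hdown ltac:(lra)). lra.
Qed.

Lemma Rabs_tanh_le (u : R) : Rabs (tanh u) <= Rabs u.
Proof.
  pose proof (cosh_pos u) as Hc.
  unfold tanh, Rdiv. rewrite Rabs_mult, Rabs_inv, (Rabs_right (cosh u)) by lra.
  apply Rmult_le_reg_r with (cosh u); [exact Hc |].
  rewrite Rmult_assoc, Rinv_l, Rmult_1_r by lra.
  apply Rabs_sinh_le.
Qed.

Lemma linear_defect_bound (a K : R) (y : nat -> R) (n m : nat) :
  Rabs a < 1 ->
  (forall j, (j < m)%nat -> Rabs (y (S (n + j)) - a * y (n + j)%nat) <= K) ->
  Rabs (y (n + m)%nat - a ^ m * y n) <= K * (1 - Rabs a ^ m) / (1 - Rabs a).
Proof.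
  intros Ha. pose proof (Rabs_pos a) as Hb.
  induction m as [| m IH]; intros Hdefect.
  - rewrite Nat.add_0_r. simpl.
    replace (y n - 1 * y n) with 0 by ring. replace (K * (1 - 1)) with 0 by ring.
    rewrite Rabs_R0. unfold Rdiv. lra.
  - replace (y (n + S m)%nat - a ^ S m * y n) with
      ((y (S (n + m)) - a * y (n + m)%nat) + a * (y (n + m)%nat - a ^ m * y n))
      by (rewrite Nat.add_succ_r; simpl; ring).
    replace (K * (1 - Rabs a ^ S m) / (1 - Rabs a)) with
      (K + Rabs a * (K * (1 - Rabs a ^ m) / (1 - Rabs a))) by (simpl; field; lra).
    eapply Rle_trans; [apply Rabs_triang |]. rewrite Rabs_mult.
    apply Rplus_le_compat.
    + apply Hdefect. lia.
    + apply Rmult_le_compat_l; [exact Hb |].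
      apply IH. intros j Hj. apply Hdefect. lia.
Qed.

(* A linear recurrence with |a| < 1 perturbed by a vanishing sequence converges
   to 0: after the perturbation is small, the geometric estimate bounds the
   drift, and the free part a^m y N dies out. *)
Lemma perturbed_linear_cv (a : R) (y : nat -> R) :
  Rabs a < 1 -> Un_cv (fun n => y (S n) - a * y n) 0 -> Un_cv y 0.
Proof.
  intros Ha Hdefect eps Heps. pose proof (Rabs_pos a) as Hb.
  destruct (Hdefect (eps * (1 - Rabs a) / 2)) as [N HN].
  { apply Rdiv_lt_0_compat; [apply Rmult_lt_0_compat |]; lra. }
  destruct (pow_lt_1_zero a Ha (eps / 2 / (Rabs (y N) + 1))) as [M HM].
  { pose proof (Rabs_pos (y N)). apply Rdiv_lt_0_compat; lra. }
  exists (N + M)%nat. intros n Hn. unfold R_dist. rewrite Rminus_0_r.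
  replace n with (N + (n - N))%nat by lia. set (m := (n - N)%nat).
  assert (Hdrift : Rabs (y (N + m)%nat - a ^ m * y N) <= eps / 2).
  { eapply Rle_trans.
    - apply (linear_defect_bound a (eps * (1 - Rabs a) / 2)); [exact Ha |].
      intros j _. left. specialize (HN (N + j)%nat ltac:(lia)).
      unfold R_dist in HN. rewrite Rminus_0_r in HN. exact HN.
    - assert (0 <= Rabs a ^ m) by (apply pow_le; exact Hb).
      replace (eps * (1 - Rabs a) / 2 * (1 - Rabs a ^ m) / (1 - Rabs a))
        with (eps / 2 * (1 - Rabs a ^ m)) by (field; lra).
      nra. }
  assert (Hfree : Rabs (a ^ m * y N) < eps / 2).
  { pose proof (Rabs_pos (y N)) as HY. specialize (HM m ltac:(unfold m; lia)).
    rewrite Rabs_mult.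
    apply Rle_lt_trans with (eps / 2 / (Rabs (y N) + 1) * Rabs (y N)).
    - apply Rmult_le_compat_r; lra.
    - apply Rmult_lt_reg_r with (Rabs (y N) + 1); [lra |].
      replace (eps / 2 / (Rabs (y N) + 1) * Rabs (y N) * (Rabs (y N) + 1))
        with (eps / 2 * Rabs (y N)) by (field; lra).
      nra. }
  replace (y (N + m)%nat) with ((y (N + m)%nat - a ^ m * y N) + a ^ m * y N) by ring.
  eapply Rle_lt_trans; [apply Rabs_triang | lra].
Qed.

Lemma prefix_bounded (D : nat -> R) (k : nat) :
  exists B, forall n, (n < k)%nat -> Rabs (D n) <= B.
Proof.
  induction k as [| k [B HB]].
  - exists 0. intros n Hn. lia.
  - exists (Rmax B (Rabs (D k))). intros n Hn.
    destruct (Nat.eq_dec n k) as [-> | Hne]; [apply Rmax_r |].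
    eapply Rle_trans; [apply HB; lia | apply Rmax_l].
Qed.

Lemma pow_antitone (c : R) (m p : nat) : 0 <= c <= 1 -> (m <= p)%nat -> c ^ p <= c ^ m.
Proof.
  intros Hc Hmp. replace p with (m + (p - m))%nat by lia. rewrite pow_add.
  assert (0 <= c ^ (p - m) <= 1).
  { split; [apply pow_le; lra |]. rewrite <- (pow1 (p - m)). apply pow_incr. lra. }
  assert (0 <= c ^ m) by (apply pow_le; lra). nra.
Qed.

Section KStepContraction.

Variables (D : nat -> R) (k : nat) (c : R).
Hypothesis k_pos : (1 <= k)%nat.
Hypothesis c_bounds : 0 <= c < 1.
Hypothesis contraction : forall (p : nat) (M : R),
  (forall j, (j < k)%nat -> Rabs (D (p + j)%nat) <= M) -> Rabs (D (p + k)%nat) <= c * M.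

(* Every block of k consecutive terms gains a factor c. *)
Lemma k_step_geometric_bound (B : R) :
  (forall n, (n < k)%nat -> Rabs (D n) <= B) -> forall n, Rabs (D n) <= B * c ^ (n / k).
Proof.
  intros Hinit.
  assert (HB : 0 <= B) by (eapply Rle_trans; [apply Rabs_pos | apply (Hinit 0%nat); lia]).
  intro n. induction n as [n IH] using (well_founded_induction Wf_nat.lt_wf).
  destruct (Nat.lt_ge_cases n k) as [Hlt | Hge].
  - rewrite Nat.div_small by exact Hlt. simpl. rewrite Rmult_1_r. apply Hinit, Hlt.
  - set (p := (n - k)%nat). replace n with (p + k)%nat by lia.
    assert (Hdiv : ((p + k) / k = S (p / k))%nat).
    { rewrite <- (Nat.mul_1_l k) at 1. rewrite Nat.div_add by lia. lia. }
    rewrite Hdiv. simpl pow.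
    replace (B * (c * c ^ (p / k))) with (c * (B * c ^ (p / k))) by ring.
    apply contraction. intros j Hj.
    eapply Rle_trans; [apply IH; lia |].
    apply Rmult_le_compat_l; [exact HB |].
    apply pow_antitone; [lra |]. apply Nat.Div0.div_le_mono. lia.
Qed.

Lemma k_step_contraction_cv : Un_cv D 0.
Proof.
  destruct (prefix_bounded D k) as [B Hinit].
  assert (HB : 0 <= B) by (eapply Rle_trans; [apply Rabs_pos | apply (Hinit 0%nat); lia]).
  intros eps Heps.
  destruct (pow_lt_1_zero c ltac:(rewrite Rabs_right; lra) (eps / (B + 1))) as [N HN].
  { apply Rdiv_lt_0_compat; lra. }
  exists (N * k)%nat. intros n Hn. unfold R_dist. rewrite Rminus_0_r.
  assert (Hblocks : (N <= n / k)%nat).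
  { rewrite <- (Nat.div_mul N k) by lia. apply Nat.Div0.div_le_mono. lia. }
  specialize (HN _ Hblocks). rewrite Rabs_right in HN by (apply Rle_ge, pow_le; lra).
  eapply Rle_lt_trans; [apply (k_step_geometric_bound B Hinit) |].
  apply Rle_lt_trans with (B * (eps / (B + 1))).
  - apply Rmult_le_compat_l; lra.
  - apply Rmult_lt_reg_r with (B + 1); [lra |].
    replace (B * (eps / (B + 1)) * (B + 1)) with (B * eps) by (field; lra). nra.
Qed.

End KStepContraction.

Lemma contraction_factor_bounds (k : nat) (b sigma : R) :
  (1 <= k)%nat -> 0 < b < 1 -> 0 < sigma -> sigma < (1 - b) / (1 - b ^ k) ->
  0 <= sigma * (1 - b ^ k) / (1 - b) < 1.
Proof.
  intros Hk Hb Hs Hsig.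
  assert (Hbk : 0 <= b ^ k < 1) by (apply pow_lt_1_compat; [lra | lia]).
  split.
  - apply Rmult_le_pos; [apply Rmult_le_pos |]; [lra | lra |].
    left. apply Rinv_0_lt_compat. lra.
  - apply Rmult_lt_reg_r with ((1 - b) / (1 - b ^ k)).
    + apply Rdiv_lt_0_compat; lra.
    + replace (sigma * (1 - b ^ k) / (1 - b) * ((1 - b) / (1 - b ^ k))) with sigma
        by (field; lra).
      lra.
Qed.

(* For a solution of the tanh recurrence the defects D m = y (m+1) - a y m form a
   k-step contraction: D (p+k) = alpha_p tanh (y (p+k) - a^k y p), and the tanh
   argument is controlled by the geometric estimate over the window p..p+k-1. *)
Lemma tanh_feedback_contraction (k : nat) (a sigma : R) (alpha y : nat -> R) :
  Rabs a < 1 ->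
  (forall n, Rabs (alpha n) <= sigma) ->
  (forall n : nat, y (n + k + 1)%nat =
     a * y (n + k)%nat + alpha n * tanh (y (n + k)%nat - a ^ k * y n)) ->
  forall (p : nat) (M : R),
    (forall j, (j < k)%nat -> Rabs (y (S (p + j)) - a * y (p + j)%nat) <= M) ->
    Rabs (y (S (p + k)) - a * y (p + k)%nat)
      <= sigma * (1 - Rabs a ^ k) / (1 - Rabs a) * M.
Proof.
  intros Ha Halpha Hrec p M Hwindow.
  replace (S (p + k)) with (p + k + 1)%nat by lia. rewrite Hrec.
  replace (a * y (p + k)%nat + alpha p * tanh (y (p + k)%nat - a ^ k * y p)
           - a * y (p + k)%nat)
    with (alpha p * tanh (y (p + k)%nat - a ^ k * y p)) by ring.
  pose proof (linear_defect_bound a M y p k Ha Hwindow) as Hdrift.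
  pose proof (Rabs_tanh_le (y (p + k)%nat - a ^ k * y p)) as Htanh.
  replace (sigma * (1 - Rabs a ^ k) / (1 - Rabs a) * M)
    with (sigma * (M * (1 - Rabs a ^ k) / (1 - Rabs a))) by (field; lra).
  rewrite Rabs_mult. apply Rmult_le_compat; [apply Rabs_pos | apply Rabs_pos | |].
  - apply Halpha.
  - eapply Rle_trans; [exact Htanh | exact Hdrift].
Qed.

(* y m represents x_{m-k}; so y 0 .. y k are the arbitrary initial values
   x_{-k}, ..., x_0, and the recurrence x_{n+1} = a x_n + alpha_n tanh(x_n - a^k x_{n-k})
   (n >= 0) reads y (n+k+1) = a y(n+k) + alpha n * tanh (y(n+k) - a^k y n). *)
Theorem mainTheorem8 (k : nat) (a sigma : R) (alpha : nat -> R) (y : nat -> R) :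
  (1 <= k)%nat ->
  0 < Rabs a < 1 ->
  0 < sigma ->
  (forall n, Rabs (alpha n) <= sigma) ->
  sigma < (1 - Rabs a) / (1 - Rabs a ^ k) ->
  (forall n : nat, y (n + k + 1)%nat = a * y (n + k)%nat + alpha n * tanh (y (n + k)%nat - a ^ k * y n)) ->
  Un_cv y 0.
Proof.
  intros Hk Ha Hsigma Halpha Hsmall Hrec.
  apply (perturbed_linear_cv a y); [lra |].
  apply (k_step_contraction_cv (fun m => y (S m) - a * y m) k
           (sigma * (1 - Rabs a ^ k) / (1 - Rabs a))).
  - exact Hk.
  - apply contraction_factor_bounds; assumption.
  - apply (tanh_feedback_contraction k a sigma alpha y); [lra | exact Halpha | exact Hrec].
Qed.
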